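(* Let $\epsilon>0$, let $(\epsilon_k)_{k\in\mathbb N}$ be positive numbers with $\sum_{k=1}^\infty\epsilon_k<\epsilon$, let $(j_k)_{k\in\mathbb N}$ be a strictly increasing sequence of even natural numbers, and let $(x_k)_{k\in\mathbb N}$ be a block sequence in $\mathfrak X_0$ such that (i) $\|x_k\|_{W_0}=1$ for all $k$; (ii) $\frac{|\operatorname{supp}x_k|}{m_{j_k}}<\epsilon_k$ for all $k$; (iii) $\|x_{k+1}\|_{G_0}\le\frac{\epsilon_k}{n_{j_k}}$ for all $k$. Then $(x_k)_{k\in\mathbb N}$ is $(1+\epsilon)$-equivalent to the unit vector basis of $c_0$, i.e. $\max_i|a_i|\le\|\sum_{i=1}^n a_ix_i\|_{W_0}\le(1+\epsilon)\max_i|a_i|$ for all $n$ and all real $a_1,\dots,a_n$.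
   Context: All spaces are real. Let $c_{00}(\mathbb N)$ be the space of finitely supported real sequences, $(e_n)$ its unit vector basis and $e_n^*$ the coordinate functionals (elements of $c_{00}(\mathbb N)$ act on each other via the usual inner product). For $x\in c_{00}(\mathbb N)$, $\operatorname{supp}x=\{n:x(n)\ne0\}$ and $\operatorname{ran}x$ is the smallest interval of $\mathbb N$ containing $\operatorname{supp}x$; for nonzero $x,y$ write $x<y$ if $\max\operatorname{ran}x<\min\operatorname{ran}y$. For an interval $E\subset\mathbb N$, $Ef=f\cdot\chi_E$. A block sequence is a sequence $x_1<x_2<\cdots$ of nonzero finitely supported vectors. Put $m_1=2^8$, $m_{j+1}=m_j^5$, $n_1=2^7$, $n_{j+1}=(2n_j)^{s_{j+1}}$ with $s_{j+1}=\log_2(m_{j+1}^4)$. $G_0$ is the smallest subset of $c_{00}(\mathbb N)$ such that: (1) it contains all $e_n^*$; (2) it is symmetric; (3) for every $j\in\mathbb N$, every $d\le n_{2j}$ and every $f_1<\dots<f_d$ in $G_0$, it contains $\frac1{m_{2j}}\sum_{i=1}^d f_i$; (4) it contains $\sum_{i=1}^d a_if_i$ whenever $d\in\mathbb N$, $a_i\in\mathbb Q$, $\sum a_i^2\le1$, and $f_i\in G_0$ have pairwise different weights. An $f\in G_0$ has weight $w(f)=m_{2j}$ (and is called a functional with weight) if $f=\frac1{m_{2j}}\sum_{i=1}^d f_i$ for some $d\le n_{2j}$ and $f_1<\dots<f_d$ in $G_0$. Fix disjoint infinite sets $\Omega_1,\Omega_2\subset\mathbb N$, let $Q_s$ be the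 (countable) set of finite sequences $(f_1,\dots,f_d)$ of nonzero elements of $G_0$ with $f_1<\dots<f_d$, and fix an injection $\sigma:Q_s\to\{2j:j\in\Omega_2\}$ with $m_{\sigma(f_1,\dots,f_d)}>\max\{1/|f_i(e_l)|:i\le d,\ l\in\operatorname{supp}f_i\}\cdot\max\operatorname{supp}f_d$. A $\sigma$-$n_{2j+1}$ special sequence is an element $(f_1,\dots,f_{n_{2j+1}})$ of $Q_s$ such that each $f_i$ is a functional with weight, $w(f_1)=m_{2j_1}$ with $j_1\in\Omega_1$ and $n_{2j+1}^2<m_{2j_1}$, and $w(f_{i+1})=m_{\sigma(f_1,\dots,f_i)}$ for $1\le i<n_{2j+1}$. $W_0=G_0\cup\{\varepsilon E(\frac1{m_{2j+1}}\sum_{i=1}^{n_{2j+1}}f_i):|\varepsilon|=1,\ E\text{ a finite interval of }\mathbb N,\ (f_i)\text{ a }\sigma\text{-}n_{2j+1}\text{ special sequence}\}$. For $x\in c_{00}(\mathbb N)$ let $\|x\|_{G_0}=\sup_{f\in G_0}|f(x)|$ and $\|x\|_{W_0}=\sup_{f\in W_0}|f(x)|$; $\mathfrak{X}_{G_0}$ and $\mathfrak{X}_0$ are the completions of $c_{00}(\mathbb N)$ under these norms. *)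

From HB Require Import structures.
From mathcomp Require Import all_boot all_order all_algebra.
From mathcomp Require Import all_classical all_reals.
From mathcomp Require Import ereal topology normedtype sequences.
Set Implicit Arguments. Unset Strict Implicit. Unset Printing Implicit Defensive.
Import Order.TTheory GRing.Theory Num.Theory.
Local Open Scope ring_scope.

(* Coordinates are indexed from 0: our coordinate i is the paper's i+1. *)

(* The parameter sequences m_j, n_j (j >= 1); the value at j = 0 is a dummy. *)
Fixpoint m_aux (k : nat) : nat :=
  match k with 0 => (2 ^ 8)%N | k'.+1 => (m_aux k' ^ 5)%N end.
Definition m_seq (j : nat) : nat := m_aux j.-1.
(* s_j = log_2 (m_j^4) (m_j^4 is a power of 2, so trunc_log is exact) *)
Definition s_seq (j : nat) : nat := trunc_log 2 (m_seq j ^ 4).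
Fixpoint n_aux (k : nat) : nat :=
  match k with 0 => (2 ^ 7)%N | k'.+1 => ((2 * n_aux k') ^ (s_seq k'.+2))%N end.
Definition n_seq (j : nat) : nat := n_aux j.-1.

Section Space.
Variable R : realType.
Definition vec := nat -> R.

Definition zerov : vec := fun _ => 0.
Definition unitv (n : nat) : vec := fun i => if i == n then 1 else 0.

Definition c00 (x : vec) : Prop := exists N, forall i, (N <= i)%N -> x i = 0.
Definition nonzero (x : vec) : Prop := exists i, x i != 0.
Definition blk (x y : vec) : Prop :=
  nonzero x /\ nonzero y /\ forall i l, x i != 0 -> y l != 0 -> (i < l)%N.

Inductive G0 : vec -> Prop :=
| G0_unit (n : nat) : G0 (unitv n)
| G0_opp (f : vec) : G0 f -> G0 (fun i => - f i)
| G0_wt (k : nat) (f : vec) : G0w k f -> G0 f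
| G0_comb (d : nat) (a : nat -> rat) (K : nat -> nat) (F : nat -> vec) :
    \sum_(i < d) (a i) ^+ 2 <= 1 ->
    (forall i, (i < d)%N -> G0w (K i) (F i)) ->
    (forall i1 i2, (i1 < d)%N -> (i2 < d)%N -> K i1 = K i2 -> i1 = i2) ->
    G0 (fun l => \sum_(i < d) ratr (a i) * F i l)
with G0w : nat -> vec -> Prop :=
| G0w_avg (j d : nat) (F : nat -> vec) :
    (0 < j)%N -> (1 <= d <= n_seq (2 * j))%N ->
    (forall i, (i < d)%N -> G0 (F i)) ->
    (forall i1 i2, (i1 < i2 < d)%N -> blk (F i1) (F i2)) ->
    G0w (2 * j) (fun l => ((m_seq (2 * j))%:R)^-1 * \sum_(i < d) F i l).

Definition nthv (s : seq vec) (i : nat) : vec := nth zerov s i.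

Definition Qs (s : seq vec) : Prop :=
  (1 <= size s)%N /\
  (forall i, (i < size s)%N -> G0 (nthv s i) /\ nonzero (nthv s i)) /\
  (forall i1 i2, (i1 < i2 < size s)%N -> blk (nthv s i1) (nthv s i2)).

Definition admissible (Om1 Om2 : nat -> Prop) (sigma : seq vec -> nat) : Prop :=
  (forall j, Om1 j -> (0 < j)%N) /\ (forall j, Om2 j -> (0 < j)%N) /\
  (forall j, Om1 j -> Om2 j -> False) /\
  (forall N, exists j, (N <= j)%N /\ Om1 j) /\
  (forall N, exists j, (N <= j)%N /\ Om2 j) /\
  (forall s t, Qs s -> Qs t -> sigma s = sigma t -> s = t) /\
  (forall s, Qs s -> exists j, Om2 j /\ sigma s = (2 * j)%N) /\
  (forall s, Qs s -> forall i l l', (i < size s)%N ->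
     nthv s i l != 0 -> nthv s (size s).-1 l' != 0 ->
     (`|nthv s i l|)^-1 * (l'.+1)%:R < (m_seq (sigma s))%:R).

Definition special (Om1 : nat -> Prop) (sigma : seq vec -> nat) (j : nat)
  (s : seq vec) : Prop :=
  size s = n_seq (2 * j + 1) /\ Qs s /\
  (exists j1, Om1 j1 /\ (n_seq (2 * j + 1) ^ 2 < m_seq (2 * j1))%N /\
              G0w (2 * j1) (nthv s 0)) /\
  (forall i, (1 <= i < size s)%N -> G0w (sigma (take i s)) (nthv s i)).

Definition W0 (Om1 : nat -> Prop) (sigma : seq vec -> nat) (f : vec) : Prop :=
  G0 f \/
  exists (eps : R) (a b j : nat) (s : seq vec),
    `|eps| = 1 /\ (0 < j)%N /\ special Om1 sigma j s /\
    f = (fun l => if (a <= l <= b)%N then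
                    eps * (((m_seq (2 * j + 1))%:R)^-1 *
                           \sum_(i < size s) nthv s i l)
                  else 0).

Definition normOver (P : vec -> Prop) (x : vec) : R :=
  sup [set r : R | exists f N, P f /\ (forall i, (N <= i)%N -> x i = 0) /\
                              r = `|\sum_(i < N) f i * x i| ].

Definition normG (x : vec) : R := normOver G0 x.
Definition normW Om1 sigma (x : vec) : R := normOver (W0 Om1 sigma) x.

Definition supp_size (x : vec) (c : nat) : Prop :=
  exists S : seq nat, uniq S /\ (forall i, (i \in S) = (x i != 0)) /\ size S = c.

End Space.

From HB Require Import structures.
From mathcomp Require Import all_boot all_order all_algebra.
From mathcomp Require Import all_classical all_reals.
From mathcomp Require Import ereal topology normedtype sequences.
From mathcomp Require Import zify lra.
Import Order.TTheory GRing.Theory Num.Theory.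
Set Implicit Arguments. Unset Strict Implicit. Unset Printing Implicit Defensive.
Local Open Scope ring_scope.

(* Lower estimate: [W_0] is closed under restriction to intervals, and restricting a
   functional to the range of [x_i] turns its action on [sum_k a_k x_k] into its action
   on [a_i x_i]; hence [|a_i| = |a_i| |x_i| <= |sum_k a_k x_k|].
   Upper estimate: every [f] in [W_0] has a pivot [k0] with [|f(x_k)| <= eps_k] for
   [k < k0], [|f(x_k)| <= 1] for [k = k0] and [|f(x_k)| <= eps_(k-1)] for [k > k0], so
   [|f(sum_k a_k x_k)| <= (1 + sum_k eps_k) max_k |a_k|].  For [f] in [G_0] the pivot
   is [0], by [|x_(k+1)|_(G_0) <= eps_k].  A special functional of weight [m_(2j+1)] is
   pointwise at most [1/m_(2j+1)], so it is at most [|supp x_k| / m_(j_k) < eps_k] on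
   [x_k] while [j_k < 2j+1]; once [j_(k-1) > 2j+1] it averages [n_(2j+1) <= n_(j_(k-1))] elements
   of [G_0], each bounded on [x_k] by [eps_(k-1) / n_(j_(k-1))]. *)

Lemma exp2_le_m_aux k : (2 ^ k.+1 <= m_aux k)%N.
Proof.
elim: k => [//|k IH] /=.
apply: (@leq_trans ((2 ^ k.+1) ^ 5)); last by rewrite leq_exp2r.
by rewrite -expnM leq_exp2l //; lia.
Qed.

Lemma m_aux_ge2 k : (2 <= m_aux k)%N.
Proof. by apply: leq_trans (exp2_le_m_aux k); rewrite -{1}(expn1 2) leq_exp2l. Qed.

Lemma m_aux_gt0 k : (0 < m_aux k)%N.
Proof. exact: leq_trans (m_aux_ge2 k). Qed.

Lemma m_aux_le_succ k : (m_aux k <= m_aux k.+1)%N.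
Proof. by rewrite /= -{1}(expn1 (m_aux k)) leq_pexp2l ?m_aux_gt0. Qed.

Lemma m_seq_gt0 k : (0 < m_seq k)%N.
Proof. exact: m_aux_gt0. Qed.

Lemma exp2_le_m_seq k : (0 < k)%N -> (2 ^ k <= m_seq k)%N.
Proof. by case: k => // k _; exact: exp2_le_m_aux. Qed.

Lemma m_seq_homo : {homo m_seq : i k / (i <= k)%N}.
Proof.
move=> i k le_ik; rewrite /m_seq.
apply: (homo_leq (r := leq) leqnn leq_trans m_aux_le_succ).
by rewrite -!subn1 leq_sub2r.
Qed.

Lemma n_aux_gt0 k : (0 < n_aux k)%N.
Proof. by elim: k => [//|k IH] /=; rewrite expn_gt0 muln_gt0 IH. Qed.

Lemma n_aux_le_succ k : (n_aux k <= n_aux k.+1)%N.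
Proof.
have s_gt0 : (0 < s_seq k.+2)%N.
  rewrite /s_seq trunc_log_gt0 /= (leq_trans (m_aux_ge2 k.+1)) //.
  by rewrite -{1}(expn1 (m_aux _)) leq_pexp2l ?m_aux_gt0.
rewrite /= (@leq_trans (2 * n_aux k)) ?leq_pmull //.
by rewrite -{1}(expn1 (2 * _)) leq_pexp2l ?muln_gt0 ?n_aux_gt0.
Qed.

Lemma n_seq_gt0 k : (0 < n_seq k)%N.
Proof. exact: n_aux_gt0. Qed.

Lemma n_seq_homo : {homo n_seq : i k / (i <= k)%N}.
Proof.
move=> i k le_ik; rewrite /n_seq.
apply: (homo_leq (r := leq) leqnn leq_trans n_aux_le_succ).
by rewrite -!subn1 leq_sub2r.
Qed.

Scheme G0_ind_mut := Induction for G0 Sort Prop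
  with G0w_ind_mut := Induction for G0w Sort Prop.
Combined Scheme G0_G0w_ind from G0_ind_mut, G0w_ind_mut.

Section SupNorm.
Variable R : realType.
Implicit Types (f : vec R) (F : nat -> vec R).

Lemma inv_m_seq_gt0 k : 0 < ((m_seq k)%:R : R)^-1.
Proof. by rewrite invr_gt0 ltr0n m_seq_gt0. Qed.

Lemma inv_m_seq_le1 k : ((m_seq k)%:R : R)^-1 <= 1.
Proof. by rewrite invf_le1 ?ltr0n ?m_seq_gt0 // ler1n m_seq_gt0. Qed.

Lemma inv_m_seq_le_half_exp k : (0 < k)%N -> ((m_seq k)%:R : R)^-1 <= (2^-1 : R) ^+ k.
Proof.
move=> k_gt0; rewrite exprVn lef_pV2 ?posrE ?ltr0n ?m_seq_gt0 ?exprn_gt0 //.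
by rewrite -natrX ler_nat exp2_le_m_seq.
Qed.

Lemma ler_sum_uniq_subset (s t : seq nat) (g : nat -> R) :
  uniq s -> uniq t -> {subset s <= t} -> (forall v, 0 <= g v) ->
  \sum_(v <- s) g v <= \sum_(v <- t) g v.
Proof.
move=> s_uniq t_uniq s_sub_t g_ge0.
have t_s : perm_eq [seq v <- t | v \in s] s.
  apply: uniq_perm; rewrite ?filter_uniq // => v.
  by rewrite mem_filter andb_idr //; exact: s_sub_t.
rewrite [X in _ <= X](bigID (fun v => v \in s)) /=.
rewrite -[\sum_(v <- t | v \in s) g v]big_filter (perm_big _ t_s).
by rewrite lerDl sumr_ge0.
Qed.

Lemma sum_exp_half_uniq (s : seq nat) :
  uniq s -> {in s, forall v, 0 < v}%N -> \sum_(v <- s) (2^-1 : R) ^+ v <= 1.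
Proof.
move=> s_uniq s_gt0; set B := (\max_(v <- s) v)%N.
have geo n : \sum_(1 <= v < n.+1) (2^-1 : R) ^+ v = 1 - (2^-1 : R) ^+ n.
  elim: n => [|n IH]; first by rewrite big_geq // expr0 subrr.
  by rewrite big_nat_recr //= IH exprS; lra.
apply: (@le_trans _ _ (\sum_(1 <= v < B.+1) (2^-1 : R) ^+ v)).
  apply: ler_sum_uniq_subset => [//|||v]; first exact: iota_uniq.
    by move=> v v_s; rewrite mem_index_iota s_gt0 //= ltnS; exact: leq_bigmax_seq.
  by rewrite exprn_ge0 // invr_ge0.
by rewrite geo lerBlDr lerDl exprn_ge0 // invr_ge0.
Qed.

Lemma ratr_norm_le1 (q : rat) : q ^+ 2 <= 1 -> `|(ratr q : R)| <= 1.
Proof.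
move=> q2_le1; rewrite -ratr_norm -(rmorph1 (ratr : rat -> R)) ler_rat.
by case: (ler0P q) => q_sgn; nra.
Qed.

(* At each coordinate at most one vector of a block sequence is nonzero. *)
Lemma norm_sum_blocks_le d F l (c : R) :
  (forall i1 i2, (i1 < i2 < d)%N -> blk (F i1) (F i2)) ->
  (forall i, (i < d)%N -> `|F i l| <= c) -> 0 <= c ->
  `|\sum_(i < d) F i l| <= c.
Proof.
move=> F_blk F_le c_ge0.
case: (pickP (fun i : 'I_d => F i l != 0)) => [i0 Fi0_nz|F0]; last first.
  by rewrite big1 ?normr0 // => i _; apply/eqP; rewrite -[_ == _]negbK F0.
rewrite (bigD1 i0) //= big1 ?addr0; first exact: F_le.
move=> i i_neq; apply/eqP; apply: contraNT i_neq => Fi_nz.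
have disj i1 i2 : (i1 < i2 < d)%N -> F i1 l != 0 -> F i2 l != 0 -> False.
  by case/F_blk=> _ [_ /(_ l l)] lt_ll /lt_ll /[apply]; rewrite ltnn.
case: (ltngtP i i0) => [lt_i|lt_i0|/val_inj -> //].
- by exfalso; apply: (disj i i0) => //; rewrite lt_i /=.
- by exfalso; apply: (disj i0 i) => //; rewrite lt_i0 /=.
Qed.

(* In a combination the weights [m_(K i) >= 2^(K i)] are distinct, so the coefficient
   bound [|a i| <= 1] already keeps the sum below [1]. *)
Lemma G0_G0w_sup_le :
  (forall f, G0 f -> forall l, `|f l| <= 1) /\
  (forall k f, G0w k f -> (0 < k)%N /\ forall l, `|f l| <= ((m_seq k)%:R)^-1).
Proof.
apply: (@G0_G0w_ind R (fun f _ => forall l, `|f l| <= 1)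
          (fun k f _ => (0 < k)%N /\ forall l, `|f l| <= ((m_seq k)%:R)^-1)).
- by move=> n l; rewrite /unitv; case: eqP; rewrite ?normr1 ?normr0.
- by move=> f _ IH l; rewrite normrN.
- by move=> k f _ [_ IH] l; exact: le_trans (IH l) (inv_m_seq_le1 k).
- move=> d a K F sum_a2 _ IH K_inj l.
  apply: le_trans (ler_norm_sum _ _ _) _.
  apply: (@le_trans _ _ (\sum_(i < d) (2^-1 : R) ^+ K i)).
    apply: ler_sum => i _; have [K_gt0 F_le] := IH i (ltn_ord i).
    rewrite normrM -[X in _ <= X]mul1r; apply: ler_pM => //.
      apply: ratr_norm_le1; apply: le_trans sum_a2.
      by rewrite (bigD1 i) //= lerDl sumr_ge0 // => i' _; exact: sqr_ge0.
    exact: le_trans (F_le l) (inv_m_seq_le_half_exp K_gt0).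
  rewrite -(big_mkord xpredT (fun i => (2^-1 : R) ^+ K i)).
  rewrite -(big_map K xpredT (fun v => (2^-1 : R) ^+ v)).
  apply: sum_exp_half_uniq.
    rewrite map_inj_in_uniq ?iota_uniq // => i1 i2.
    by rewrite !mem_index_iota; exact: K_inj.
  by move=> v /mapP [i]; rewrite mem_index_iota => /IH [K_gt0 _] ->.
- move=> j d F j_gt0 _ _ IH F_blk; split; first by rewrite muln_gt0 j_gt0.
  move=> l; rewrite normrM ger0_norm ?invr_ge0 ?ler0n //.
  rewrite -[X in _ <= X]mulr1 ler_pM2l ?inv_m_seq_gt0 //.
  by apply: norm_sum_blocks_le => // i /IH.
Qed.

Lemma G0_sup_le1 f : G0 f -> forall l, `|f l| <= 1.
Proof. exact: G0_G0w_sup_le.1. Qed.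

End SupNorm.

Section Restriction.
Variable R : realType.
Implicit Types (f : vec R) (F : nat -> vec R).

Definition restr (a b : nat) f : vec R :=
  fun l => if (a <= l <= b)%N then f l else 0.

Lemma restr_sum (I : Type) (r : seq I) (F : I -> vec R) a b :
  restr a b (fun l => \sum_(i <- r) F i l) =
  (fun l => \sum_(i <- r) restr a b (F i) l).
Proof. by apply: funext => l; rewrite /restr; case: ifP => // _; rewrite big1. Qed.

Lemma restr_scale (c : R) f a b :
  restr a b (fun l => c * f l) = (fun l => c * restr a b f l).
Proof. by apply: funext => l; rewrite /restr; case: ifP; rewrite ?mulr0. Qed.

Lemma G0_zero : G0 (zerov R).
Proof.
have := @G0_comb R 0 (fun _ => 0) id (fun _ => zerov R).
rewrite (_ : (fun l => _) = zerov R); last by apply: funext => l; rewrite big_ord0.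
by apply; rewrite ?big_ord0.
Qed.

Lemma nonzeroPn f : ~ nonzero f -> f = zerov R.
Proof.
by move=> f0; apply: funext => l; apply/eqP/negPn/negP => fl; apply: f0; exists l.
Qed.

Definition restr_closed f := forall a b, G0 (restr a b f).
Definition restr_closed_w k f :=
  forall a b, G0w k (restr a b f) \/ restr a b f = zerov R.

Lemma restr_closed_unitv n : restr_closed (unitv R n).
Proof.
move=> a b; case n_ab: (a <= n <= b)%N.
  rewrite (_ : restr a b _ = unitv R n); first exact: G0_unit.
  apply: funext => l; rewrite /restr /unitv.
  by case: eqP => [->|]; rewrite ?n_ab ?if_same.
rewrite (_ : restr a b _ = zerov R); first exact: G0_zero.
apply: funext => l; rewrite /restr /unitv.
by case: eqP => [->|]; rewrite ?n_ab ?if_same.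
Qed.

(* A component whose restriction vanishes no longer has weight [m_(K i)]: it is
   replaced by the unrestricted one with coefficient [0]. *)
Lemma restr_closed_comb d (a : nat -> rat) K F :
  \sum_(i < d) a i ^+ 2 <= 1 ->
  (forall i, (i < d)%N -> G0w (K i) (F i)) ->
  (forall i, (i < d)%N -> restr_closed_w (K i) (F i)) ->
  (forall i1 i2, (i1 < d)%N -> (i2 < d)%N -> K i1 = K i2 -> i1 = i2) ->
  restr_closed (fun l => \sum_(i < d) ratr (a i) * F i l).
Proof.
move=> sum_a2 F_w F_restr K_inj lo hi.
pose kept i := `[< G0w (K i) (restr lo hi (F i)) >].
pose a' i := if kept i then a i else 0.
pose F' i := if kept i then restr lo hi (F i) else F i.
rewrite restr_sum (_ : (fun l => _) = (fun l => \sum_(i < d) ratr (a' i) * F' i l)).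
  apply: G0_comb K_inj.
    apply: le_trans sum_a2; apply: ler_sum => i _; rewrite /a'.
    by case: ifP => // _; rewrite expr0n sqr_ge0.
  by move=> i i_lt; rewrite /F'; case: ifP => [/asboolP //|_]; exact: F_w.
apply: funext => l; apply: eq_bigr => i _; rewrite restr_scale /a' /F'.
case: ifP => // not_kept; case: (F_restr i (ltn_ord i) lo hi) => [F_w'|->].
  by move: not_kept; rewrite /kept; case: asboolP.
by rewrite rmorph0 /zerov !mul0r mulr0.
Qed.

Lemma restr_nz a b f l : restr a b f l != 0 -> f l != 0.
Proof. by rewrite /restr; case: ifP => // _; rewrite eqxx. Qed.

Definition supp_lt (f g : vec R) := forall l l', f l != 0 -> g l' != 0 -> (l < l')%N.

Lemma sum_blocks_drop_zero d F :
  (forall i1 i2, (i1 < i2 < d)%N -> supp_lt (F i1) (F i2)) ->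
  exists s : seq nat, [/\ (size s <= d)%N,
    forall t, (t < size s)%N -> (nth 0 s t < d)%N /\ nonzero (F (nth 0 s t)),
    forall t1 t2, (t1 < t2 < size s)%N -> blk (F (nth 0 s t1)) (F (nth 0 s t2)) &
    forall l, \sum_(i < d) F i l = \sum_(t < size s) F (nth 0 s t) l].
Proof.
move=> F_blk; set s := [seq i <- iota 0 d | `[< nonzero (F i) >]].
have s_in t : (t < size s)%N -> (nth 0 s t < d)%N /\ nonzero (F (nth 0 s t)).
  by move=> /(mem_nth 0); rewrite mem_filter mem_iota add0n => /andP [/asboolP].
exists s; split => //.
- by rewrite size_filter (leq_trans (count_size _ _)) // size_iota.
- move=> t1 t2 /andP [lt_t12 lt_t2]; have lt_t1 := ltn_trans lt_t12 lt_t2.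
  split; first exact: (s_in _ lt_t1).2.
  split; first exact: (s_in _ lt_t2).2.
  apply: F_blk; rewrite (s_in _ lt_t2).1 andbT.
  apply: (sorted_ltn_nth ltn_trans) => //.
  by apply: sorted_filter; [exact: ltn_trans | exact: iota_ltn_sorted].
- move=> l; rewrite -(big_mkord xpredT (fun i => F i l)).
  rewrite (bigID (fun i => `[< nonzero (F i) >])) /= [X in _ + X]big1 ?addr0.
    by rewrite -big_filter /index_iota subn0 (big_nth 0) big_mkord.
  by move=> i /asboolP /nonzeroPn ->.
Qed.

Lemma restr_closed_avg j d F :
  (0 < j)%N -> (0 < d <= n_seq (2 * j))%N ->
  (forall i, (i < d)%N -> restr_closed (F i)) ->
  (forall i1 i2, (i1 < i2 < d)%N -> blk (F i1) (F i2)) ->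
  restr_closed_w (2 * j) (fun l => ((m_seq (2 * j))%:R)^-1 * \sum_(i < d) F i l).
Proof.
move=> j_gt0 /andP [_ d_le] F_restr F_blk lo hi.
pose G i := restr lo hi (F i).
have G_lt i1 i2 : (i1 < i2 < d)%N -> supp_lt (G i1) (G i2).
  by move=> /F_blk [_ [_ F12]] l l' /restr_nz G1 /restr_nz G2; exact: F12.
have [s [s_le s_in s_blk G_sum]] := sum_blocks_drop_zero G_lt.
rewrite restr_scale restr_sum (_ : (fun l => _) =
  (fun l => ((m_seq (2 * j))%:R)^-1 * \sum_(t < size s) G (nth 0 s t) l)); last first.
  by apply: funext => l; rewrite G_sum.
case: (posnP (size s)) => [s0|s_gt0].
  by right; apply: funext => l; rewrite s0 big_ord0 mulr0.
left; apply: (@G0w_avg R j (size s) (fun t => G (nth 0 s t))) => //.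
  by rewrite s_gt0 (leq_trans s_le).
by move=> t /s_in [lt_d _]; exact: F_restr.
Qed.

Lemma G0_restr a b f : G0 f -> G0 (restr a b f).
Proof.
move: a b f; suff [G0_closed _] : (forall f, G0 f -> restr_closed f) /\
    (forall k f, G0w k f -> restr_closed_w k f) by move=> a b f /G0_closed.
apply: (@G0_G0w_ind R (fun f _ => restr_closed f) (fun k f _ => restr_closed_w k f)).
- exact: restr_closed_unitv.
- move=> f _ IH a' b'; rewrite (_ : restr _ _ _ = fun l => - restr a' b' f l).
    exact: G0_opp.
  by apply: funext => l; rewrite /restr; case: ifP; rewrite ?oppr0.
- move=> k f _ IH a' b'.
  by case: (IH a' b') => [w|->]; [exact: G0_wt w | exact: G0_zero].
- by move=> d c K F sum_c F_w IH K_inj; exact: (restr_closed_comb sum_c F_w).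
- by move=> j d F j_gt0 d_le _ IH F_blk; exact: (restr_closed_avg j_gt0 d_le).
Qed.
End Restriction.

Section NormingSets.
Variable R : realType.
Implicit Types (f x : vec R).

Lemma sum_ord_vanish (h : nat -> R) N1 N2 :
  (forall i, (N1 <= i)%N -> h i = 0) -> (forall i, (N2 <= i)%N -> h i = 0) ->
  \sum_(i < N1) h i = \sum_(i < N2) h i.
Proof.
wlog le_N12 : N1 N2 / (N1 <= N2)%N.
  by move=> wlog_le h1 h2; case: (leqP N1 N2) => [|/ltnW] /wlog_le ->.
move=> h1 _; rewrite -!(big_mkord xpredT) (big_cat_nat (leq0n N1) le_N12) /=.
rewrite [X in _ + X]big1_seq ?addr0 // => i /andP [_].
by rewrite mem_index_iota => /andP [/h1].
Qed.

Lemma c00_restr a b x : c00 x -> c00 (restr a b x).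
Proof. by case=> N xN; exists N => i /xN; rewrite /restr => ->; rewrite if_same. Qed.

Lemma c00_scale (c : R) x : c00 x -> c00 (fun l => c * x l).
Proof. by case=> N xN; exists N => i /xN ->; rewrite mulr0. Qed.

Definition norming (P : vec R -> Prop) :=
  [/\ forall f, P f -> forall l, `|f l| <= 1,
      forall a b f, P f -> P (restr a b f) & P (unitv R 0)].

Variable P : vec R -> Prop.
Hypothesis P_norming : norming P.

Let evaluations x := [set r : R | exists f N,
  P f /\ (forall i, (N <= i)%N -> x i = 0) /\ r = `|\sum_(i < N) f i * x i| ]%classic.

Lemma evaluations_ubound x : c00 x -> has_ubound (evaluations x).
Proof.
have [P_sup_le1 _ _] := P_norming.
case=> N0 xN0; exists (\sum_(i < N0) `|x i|) => _ [f [N [Pf [xN ->]]]].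
apply: le_trans (ler_norm_sum _ _ _) _.
rewrite (@sum_ord_vanish (fun i => `|x i|) N0 N); last 2 first.
- by move=> i /xN0 /= ->; rewrite normr0.
- by move=> i /xN /= ->; rewrite normr0.
apply: ler_sum => i _; rewrite normrM -[X in _ <= X]mul1r ler_wpM2r //.
exact: P_sup_le1.
Qed.

Lemma evaluations_neq0 x : c00 x -> (evaluations x !=set0)%classic.
Proof.
have [_ _ P_unitv0] := P_norming.
by case=> N0 xN0; exists `|\sum_(i < N0) unitv R 0 i * x i|, (unitv R 0), N0.
Qed.

Lemma normOver_ge0 x : c00 x -> 0 <= normOver P x.
Proof.
move=> x_c00; have [r r_val] := evaluations_neq0 x_c00.
apply: le_trans (ub_le_sup (evaluations_ubound x_c00) r_val).
by case: r_val => f [N [_ [_ ->]]].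
Qed.

Lemma normOver_le_ub x (B : R) : c00 x ->
  (forall f N, P f -> (forall i, (N <= i)%N -> x i = 0) ->
     `|\sum_(i < N) f i * x i| <= B) -> normOver P x <= B.
Proof.
move=> x_c00 B_ub; apply: ge_sup; first exact: evaluations_neq0.
by move=> _ [f [N [Pf [xN ->]]]]; exact: B_ub.
Qed.

(* Since [P] is closed under restriction, [N] need not bound the support of [x]. *)
Lemma ler_normOver x f N : c00 x -> P f ->
  `|\sum_(i < N) f i * x i| <= normOver P x.
Proof.
have [_ P_restr _] := P_norming.
move=> x_c00 Pf; case: (posnP N) => [->|N_gt0].
  by rewrite big_ord0 normr0 normOver_ge0.
have [N0 xN0] := x_c00.
have in_range i : (0 <= i <= N.-1)%N = (i < N)%N by rewrite leq0n /= -ltnS prednK.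
have -> : \sum_(i < N) f i * x i = \sum_(i < N + N0) restr 0 N.-1 f i * x i.
  rewrite (@sum_ord_vanish (fun i => restr 0 N.-1 f i * x i) (N + N0) N).
  - by apply: eq_bigr => i _; rewrite /restr in_range ltn_ord.
  - by move=> i /(leq_trans (leq_addl _ _)) /xN0 ->; rewrite mulr0.
  - by move=> i N_le; rewrite /restr in_range ltnNge N_le mul0r.
apply: ub_le_sup; first exact: evaluations_ubound.
exists (restr 0 N.-1 f), (N + N0); split; first exact: P_restr.
by split => // i /(leq_trans (leq_addl _ _)) /xN0.
Qed.

Lemma normOver_restr_le a b x : c00 x -> normOver P (restr a b x) <= normOver P x.
Proof.
have [_ P_restr _] := P_norming.
move=> x_c00; apply: normOver_le_ub => [|f N Pf _]; first exact: c00_restr.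
rewrite (eq_bigr (fun i : 'I_N => restr a b f i * x i)).
  exact: (ler_normOver N x_c00 (P_restr a b f Pf)).
by move=> i _; rewrite /restr; case: ifP; rewrite ?mul0r ?mulr0.
Qed.

Lemma normOver_scale_ge (c : R) x : c00 x ->
  `|c| * normOver P x <= normOver P (fun l => c * x l).
Proof.
move=> x_c00; case: (eqVneq c 0) => [->|c_neq0].
  by rewrite normr0 mul0r normOver_ge0 //; exact: c00_scale.
rewrite mulrC -ler_pdivlMr ?normr_gt0 //.
apply: normOver_le_ub => // f N Pf _.
rewrite ler_pdivlMr ?normr_gt0 // -normrM mulr_suml.
rewrite (eq_bigr (fun i : 'I_N => f i * (c * x i))).
  exact: (ler_normOver N (c00_scale c x_c00) Pf).
by move=> i _; rewrite -mulrA (mulrC (x i)).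
Qed.

End NormingSets.

Section SpecialFunctionals.
Variables (R : realType) (Om1 : nat -> Prop) (sigma : seq (vec R) -> nat).
Implicit Types (e : R) (f : vec R) (s : seq (vec R)).

Definition special_fun (e : R) (a b j : nat) s : vec R :=
  restr a b (fun l => e * (((m_seq (2 * j + 1))%:R)^-1 * \sum_(t < size s) nthv s t l)).

Lemma W0_cases f : W0 Om1 sigma f -> G0 f \/
  exists e a b j s, [/\ `|e| = 1, (0 < j)%N, special Om1 sigma j s &
                        f = special_fun e a b j s].
Proof.
case=> [G0f|[e [a [b [j [s [e1 [j_gt0 [spec ->]]]]]]]]]; first by left.
by right; exists e, a, b, j, s.
Qed.

Lemma special_fun_sup_le e a b j s l : `|e| = 1 -> special Om1 sigma j s ->
  `|special_fun e a b j s l| <= ((m_seq (2 * j + 1))%:R)^-1.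
Proof.
move=> e1 [_ [[_ [s_G0 s_blk]] _]]; rewrite /special_fun /restr.
case: ifP => _; last by rewrite normr0 ltW ?inv_m_seq_gt0.
rewrite normrM e1 mul1r normrM ger0_norm ?invr_ge0 ?ler0n //.
rewrite -[X in _ <= X]mulr1 ler_pM2l ?inv_m_seq_gt0 //.
by apply: norm_sum_blocks_le => // t /s_G0 [/G0_sup_le1].
Qed.

Lemma W0_sup_le1 f : W0 Om1 sigma f -> forall l, `|f l| <= 1.
Proof.
case/W0_cases => [/G0_sup_le1 //|[e [a [b [j [s [e1 _ spec ->]]]]]] l].
exact: (le_trans (special_fun_sup_le a b l e1 spec) (inv_m_seq_le1 R _)).
Qed.

Lemma restr_restr a b a' b' f :
  restr a b (restr a' b' f) = restr (maxn a a') (minn b b') f.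
Proof.
apply: funext => l; rewrite /restr geq_max leq_min.
by case: (a <= l)%N; case: (a' <= l)%N; case: (l <= b)%N; case: (l <= b')%N.
Qed.

Lemma W0_restr a b f : W0 Om1 sigma f -> W0 Om1 sigma (restr a b f).
Proof.
case/W0_cases => [G0f|[e [a' [b' [j [s [e1 j_gt0 spec ->]]]]]]].
  by left; exact: G0_restr.
by right; exists e, (maxn a a'), (minn b b'), j, s; rewrite /special_fun restr_restr.
Qed.

Lemma G0_norming : norming (@G0 R).
Proof. by split=> [f /G0_sup_le1 | a b f /G0_restr | ]; last exact: G0_unit. Qed.

Lemma W0_norming : norming (W0 Om1 sigma).
Proof.
by split=> [f /W0_sup_le1 | a b f /W0_restr | ]; last by left; exact: G0_unit.
Qed.

Lemma ler_normG f N (y : vec R) : c00 y -> G0 f ->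
  `|\sum_(i < N) f i * y i| <= normG y.
Proof. by move=> y_c00 G0f; exact: (ler_normOver G0_norming N y_c00 G0f). Qed.

Lemma ler_normW f N (y : vec R) : c00 y -> W0 Om1 sigma f ->
  `|\sum_(i < N) f i * y i| <= normW Om1 sigma y.
Proof. by move=> y_c00 W0f; exact: (ler_normOver W0_norming N y_c00 W0f). Qed.

Lemma special_fun_apply e a b j s N (y : vec R) :
  \sum_(i < N) special_fun e a b j s i * y i =
  e * (((m_seq (2 * j + 1))%:R)^-1 *
       \sum_(t < size s) \sum_(i < N) restr a b (nthv s t) i * y i).
Proof.
rewrite exchange_big !mulr_sumr; apply: eq_bigr => i _.
rewrite /special_fun /restr; case: ifP => _; last first.
  by rewrite mul0r big1 ?mulr0 // => t _; rewrite mul0r.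
by rewrite -!mulrA -mulr_suml.
Qed.

End SpecialFunctionals.

Section PivotBound.
Variables (R : realType) (eps : nat -> R).

Definition pivot_bound (k0 k : nat) : R :=
  if (k < k0)%N then eps k else if k == k0 then 1 else eps k.-1.

Lemma sum_pivot_bound_le k0 n : (forall k, 0 <= eps k) ->
  \sum_(k < n) pivot_bound k0 k <= 1 + \sum_(k < n) eps k.
Proof.
move=> eps_ge0.
have inv : \sum_(k < n) pivot_bound k0 k <=
    if (k0 < n)%N then 1 + \sum_(k < n.-1) eps k else \sum_(k < n) eps k.
  elim: n => [|n IH]; first by rewrite !big_ord0.
  rewrite big_ord_recr /= [pivot_bound k0 n]/pivot_bound ltnS.
  case: (ltngtP n k0) IH => [lt_nk0|lt_k0n|->] IH.
  - by rewrite big_ord_recr lerD2r.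
  - case: n lt_k0n IH => // n _ IH.
    by rewrite [X in _ <= _ + X]big_ord_recr /= addrA lerD2r.
  - by rewrite addrC lerD2l.
apply: le_trans inv _; case: ifP => _; last by rewrite lerDr.
case: n => [|n]; first by rewrite big_ord0.
by rewrite [X in _ <= _ + X]big_ord_recr lerD2l lerDl.
Qed.

End PivotBound.

Lemma partial_sum_lt (R : realType) (eps : nat -> R) (e : R) :
  (forall k, 0 <= eps k) -> (\sum_(0 <= k <oo) (eps k)%:E < e%:E)%E ->
  forall n, \sum_(k < n) eps k < e.
Proof.
move=> eps_ge0 series_lt n; rewrite -lte_fin -(big_mkord xpredT) -sumEFin.
apply: le_lt_trans series_lt; apply: nneseries_lim_ge => k _ _.
by rewrite lee_fin.
Qed.

Section BlockSequence.
Variables (R : realType) (Om1 : nat -> Prop) (sigma : seq (vec R) -> nat).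
Variables (epsk : nat -> R) (j : nat -> nat) (x : nat -> vec R).
Hypothesis epsk_gt0 : forall k, 0 < epsk k.
Hypothesis j_incr : forall k, (j k < j k.+1)%N.
Hypothesis j_even : forall k, ~~ odd (j k).
Hypothesis x_c00 : forall k, c00 (x k).
Hypothesis x_blk : forall k, blk (x k) (x k.+1).
Hypothesis x_normW : forall k, normW Om1 sigma (x k) = 1.
Hypothesis x_supp :
  forall k, exists c, supp_size (x k) c /\ c%:R / (m_seq (j k))%:R < epsk k.
Hypothesis x_normG : forall k, normG (x k.+1) <= epsk k / (n_seq (j k))%:R.

Lemma x_sup_le1 k i : `|x k i| <= 1.
Proof.
have W0_ei : W0 Om1 sigma (unitv R i) by left; exact: G0_unit.
have := ler_normW i.+1 (x_c00 k) W0_ei.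
rewrite x_normW big_ord_recr /= big1 ?add0r => [|l _].
  by rewrite /unitv eqxx mul1r.
by rewrite /unitv ltn_eqF ?mul0r.
Qed.

Lemma sum_norm_x_le k N c : supp_size (x k) c -> \sum_(i < N) `|x k i| <= c%:R.
Proof.
case=> S [S_uniq [S_supp <-]].
rewrite -(big_mkord xpredT (fun i => `|x k i|)) (bigID (fun i => x k i != 0)) /=.
rewrite [X in _ + X]big1 ?addr0.
  rewrite -big_filter; apply: (@le_trans _ _ (\sum_(i <- _) (1%N)%:R)).
    by apply: ler_sum => i _; rewrite mulr1n x_sup_le1.
  rewrite -natr_sum sum1_size ler_nat uniq_leq_size ?filter_uniq ?iota_uniq // => i.
  by rewrite mem_filter S_supp => /andP [].
by move=> i /negPn /eqP ->; rewrite normr0.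
Qed.

Lemma normG_x_le k : normG (x k.+1) <= epsk k.
Proof.
apply: le_trans (x_normG k) _.
rewrite ler_pdivrMr ?ltr0n ?n_seq_gt0 //.
by apply: ler_peMr; [exact: ltW | rewrite ler1n n_seq_gt0].
Qed.

Lemma G0_apply_x_le f N : G0 f ->
  forall k, `|\sum_(i < N) f i * x k i| <= pivot_bound epsk 0 k.
Proof.
move=> G0f [|k]; rewrite /pivot_bound /=.
  by rewrite -(x_normW 0); apply: ler_normW => //; left.
exact: le_trans (ler_normG N (x_c00 _) G0f) (normG_x_le k).
Qed.

Lemma special_apply_x_small e a b j0 s N k : `|e| = 1 -> special Om1 sigma j0 s ->
  (j k < 2 * j0 + 1)%N -> `|\sum_(i < N) special_fun e a b j0 s i * x k i| < epsk k.
Proof.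
move=> e1 spec lt_jk; have [c [supp_c c_lt]] := x_supp k.
apply: le_lt_trans c_lt; apply: le_trans (ler_norm_sum _ _ _) _.
apply: (@le_trans _ _ (((m_seq (2 * j0 + 1))%:R)^-1 * \sum_(i < N) `|x k i|)).
  rewrite mulr_sumr; apply: ler_sum => i _; rewrite normrM ler_wpM2r //.
  by have := special_fun_sup_le a b i e1 spec.
rewrite mulrC ler_pM ?sumr_ge0 ?invr_ge0 ?ler0n ?(sum_norm_x_le _ supp_c) //.
by rewrite lef_pV2 ?posrE ?ltr0n ?m_seq_gt0 // ler_nat m_seq_homo // ltnW.
Qed.

Lemma special_apply_x_large e a b j0 s N k : `|e| = 1 -> special Om1 sigma j0 s ->
  (2 * j0 + 1 < j k)%N -> `|\sum_(i < N) special_fun e a b j0 s i * x k.+1 i| <= epsk k.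
Proof.
move=> e1 [size_s [[_ [s_G0 _]] _]] lt_jk.
rewrite special_fun_apply normrM e1 mul1r normrM ger0_norm ?invr_ge0 ?ler0n //.
apply: (@le_trans _ _ (\sum_(t < size s) normG (x k.+1))).
  rewrite -[X in _ <= X]mul1r.
  apply: ler_pM; rewrite ?invr_ge0 ?ler0n ?inv_m_seq_le1 //.
  apply: le_trans (ler_norm_sum _ _ _) _; apply: ler_sum => t _.
  by apply: ler_normG => //; apply: G0_restr; exact: (s_G0 t (ltn_ord t)).1.
rewrite sumr_const card_ord size_s -mulr_natr.
apply: le_trans (ler_wpM2r (ler0n _ _) (x_normG k)) _.
rewrite mulrAC ler_pdivrMr ?ltr0n ?n_seq_gt0 // ler_pM2l // ler_nat.
by apply: n_seq_homo; exact: ltnW.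
Qed.

Lemma leq_j k : (k <= j k)%N.
Proof. by elim: k => // k IH; exact: leq_ltn_trans IH (j_incr k). Qed.

Lemma j_homo : {homo j : k k' / (k <= k')%N}.
Proof. exact: homo_leq leqnn leq_trans (fun k => ltnW (j_incr k)). Qed.

(* The pivot is the first [k] with [j k] above the odd index [2 j0 + 1]. *)
Lemma special_apply_x_le e a b j0 s N :
  `|e| = 1 -> (0 < j0)%N -> special Om1 sigma j0 s -> exists k0, forall k,
    `|\sum_(i < N) special_fun e a b j0 s i * x k i| <= pivot_bound epsk k0 k.
Proof.
move=> e1 j0_gt0 spec; set J := (2 * j0 + 1)%N.
have J_lt_j : exists k, (J < j k)%N by exists J.+1; exact: leq_j.
have [k0 J_lt_jk0 k0_min] := ex_minnP J_lt_j.
exists k0 => k; rewrite /pivot_bound; case: (ltngtP k k0) => [lt_kk0|lt_k0k|->].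
- apply/ltW/special_apply_x_small => //.
  have le_jk : (j k <= J)%N.
    by rewrite leqNgt; apply: contraL lt_kk0 => /k0_min; rewrite -leqNgt.
  rewrite ltn_neqAle le_jk andbT.
  by apply: contraNneq (j_even k) => ->; rewrite oddD oddM.
- case: k lt_k0k => // k lt_k0k /=.
  apply: special_apply_x_large => //; exact: leq_trans J_lt_jk0 (j_homo _).
- rewrite -(x_normW k0); apply: ler_normW => //.
  by right; exists e, a, b, j0, s; do 3!(split => //).
Qed.

Lemma W0_apply_x_le f N : W0 Om1 sigma f -> exists k0, forall k,
  `|\sum_(i < N) f i * x k i| <= pivot_bound epsk k0 k.
Proof.
case/W0_cases => [G0f|[e [a [b [j0 [s [e1 j0_gt0 spec ->]]]]]]].
  by exists 0%N; exact: G0_apply_x_le.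
exact: special_apply_x_le.
Qed.

Lemma x_supp_lt k i l l' : (k < i)%N -> x k l != 0 -> x i l' != 0 -> (l < l')%N.
Proof.
move=> /subnKC <-; elim: (i - k.+1)%N l' => [|d IH] l' xl xl'.
  by case: (x_blk k) => [_ [_]]; apply; rewrite // -(addn0 k.+1).
have [[l'' xl''] [_ lt_x]] := x_blk (k.+1 + d).
by apply: ltn_trans (IH _ xl xl'') (lt_x _ _ xl'' _); rewrite -addnS.
Qed.

Lemma c00_lincomb n (a : nat -> R) : c00 (fun l => \sum_(i < n) a i * x i l).
Proof.
elim: n => [|n [N xN]]; first by exists 0%N => i _; rewrite big_ord0.
have [N' xN'] := x_c00 n; exists (maxn N N') => i.
rewrite geq_max => /andP [/xN sum_0 /xN' x_0].
by rewrite big_ord_recr /= sum_0 x_0 mulr0 addr0.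
Qed.

(* [lo] is the first point of the support of [x k], [hi + 1] that of [x k.+1]. *)
Lemma x_range k : exists lo hi,
  restr lo hi (x k) = x k /\ forall k', k' != k -> restr lo hi (x k') = zerov R.
Proof.
have [[l0 xl0] [[l1 xl1] _]] := x_blk k.
have [lo x_lo lo_min] := ex_minnP (ex_intro (fun l => x k l != 0) l0 xl0).
have [hi x_hi hi_min] := ex_minnP (ex_intro (fun l => x k.+1 l != 0) l1 xl1).
have lt_lohi := x_supp_lt (ltnSn k) x_lo x_hi.
exists lo, hi.-1; split.
  apply: funext => l; rewrite /restr; case: ifP => // l_out; apply/esym/eqP.
  apply: contraFT l_out => xl; have := x_supp_lt (ltnSn k) xl x_hi.
  by have := lo_min _ xl; lia.
move=> k' k'_neq; apply: funext => l; rewrite /restr /zerov.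
case: ifP => // /andP [lo_l l_hi]; apply/eqP/negPn/negP => xl.
case: (ltngtP k' k) => [lt_k'k|lt_kk'|eq_k'k]; last by rewrite eq_k'k eqxx in k'_neq.
  by have := x_supp_lt lt_k'k xl x_lo; lia.
have hi_le : (hi <= l)%N.
  move: lt_kk'; rewrite leq_eqVlt => /orP [/eqP eq_k'|lt_k1k'].
    by apply: hi_min; rewrite eq_k'.
  exact: ltnW (x_supp_lt lt_k1k' x_hi xl).
lia.
Qed.

Lemma normW_lincomb_ge n (a : nat -> R) :
  \big[Num.max/0]_(i < n) `|a i| <= normW Om1 sigma (fun l => \sum_(k < n) a k * x k l).
Proof.
apply: bigmax_le => [|[i lt_in] _ /=].
  exact: (normOver_ge0 (W0_norming Om1 sigma) (c00_lincomb n a)).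
have [lo [hi [x_in x_out]]] := x_range i.
have restr_y : restr lo hi (fun l => \sum_(k < n) a k * x k l) = (fun l => a i * x i l).
  rewrite restr_sum; apply: funext => l.
  rewrite (bigD1 (Ordinal lt_in)) //= big1 ?addr0.
    by rewrite restr_scale x_in.
  move=> k k_neq; rewrite restr_scale x_out; first by rewrite /zerov mulr0.
  by apply: contraNneq k_neq => eq_ki; apply/eqP; exact: val_inj.
rewrite -[`|a i|]mulr1 -(x_normW i).
apply: le_trans (normOver_scale_ge (W0_norming Om1 sigma) (a i) (x_c00 i)) _.
rewrite -restr_y.
exact: (normOver_restr_le (W0_norming Om1 sigma) lo hi (c00_lincomb n a)).
Qed.

Lemma normW_lincomb_le n (a : nat -> R) :
  normW Om1 sigma (fun l => \sum_(k < n) a k * x k l) <=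
  (1 + \sum_(k < n) epsk k) * \big[Num.max/0]_(k < n) `|a k|.
Proof.
set M := \big[Num.max/0]_(k < n) `|a k|.
have M_ge0 : 0 <= M by apply: bigmax_ge_id.
apply: (normOver_le_ub (W0_norming Om1 sigma) (c00_lincomb n a)) => f N W0f _.
have [k0 f_x_le] := W0_apply_x_le N W0f.
have -> : \sum_(l < N) f l * (\sum_(k < n) a k * x k l) =
          \sum_(k < n) a k * \sum_(l < N) f l * x k l.
  under eq_bigr do rewrite mulr_sumr.
  rewrite exchange_big; apply: eq_bigr => k _; rewrite mulr_sumr.
  by apply: eq_bigr => l _; rewrite mulrCA.
apply: le_trans (ler_norm_sum _ _ _) _.
apply: (@le_trans _ _ (\sum_(k < n) M * pivot_bound epsk k0 k)).
  apply: ler_sum => k _; rewrite normrM.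
  by apply: ler_pM; rewrite ?normr_ge0 ?le_bigmax ?f_x_le.
rewrite -mulr_sumr mulrC; apply: ler_wpM2r => //.
by apply: sum_pivot_bound_le => k; exact: ltW.
Qed.

End BlockSequence.

Theorem mainTheorem10 (R : realType) (Om1 Om2 : nat -> Prop)
  (sigma : seq (vec R) -> nat)
  (Hadm : admissible Om1 Om2 sigma)
  (eps : R) (epsk : nat -> R) (j : nat -> nat) (x : nat -> vec R) :
  0 < eps ->
  (forall k, 0 < epsk k) ->
  (\sum_(0 <= k <oo) (epsk k)%:E < eps%:E)%E ->
  (forall k, (j k < j k.+1)%N) ->
  (forall k, ~~ odd (j k) /\ (0 < j k)%N) ->
  (forall k, c00 (x k)) ->
  (forall k, blk (x k) (x k.+1)) ->
  (forall k, normW Om1 sigma (x k) = 1) ->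
  (forall k, exists c, supp_size (x k) c /\ c%:R / (m_seq (j k))%:R < epsk k) ->
  (forall k, normG (x k.+1) <= epsk k / (n_seq (j k))%:R) ->
  forall (n : nat) (a : nat -> R),
    let M := \big[Num.max/0]_(i < n) `|a i| in
    M <= normW Om1 sigma (fun l => \sum_(i < n) a i * x i l) /\
    normW Om1 sigma (fun l => \sum_(i < n) a i * x i l) <= (1 + eps) * M.
Proof.
move=> _ epsk_gt0 series_lt j_incr j_even x_c00 x_blk x_normW x_supp x_normG n a M.
have j_even' k : ~~ odd (j k) := (j_even k).1.
split; first exact: (normW_lincomb_ge x_c00 x_blk x_normW n a).
have := normW_lincomb_le epsk_gt0 j_incr j_even' x_c00 x_normW x_supp x_normG n a.
move/le_trans; apply.
apply: ler_wpM2r; first exact: bigmax_ge_id.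
rewrite lerD2l ltW //.
exact: (partial_sum_lt (fun k => ltW (epsk_gt0 k)) series_lt n).
Qed.
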